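(* Let $0<p<1/2$ and $\alpha_p=\frac12\log_2\frac{1}{4p(1-p)}$. There exists a constant $C_p>0$ depending only on $p$ such that for all sufficiently large $n$ (with $pn$ an integer) and all integers $1\le d\le n$, $$\frac{\mathrm{Vol}(n,pn;d)}{\mathrm{Vol}(n,pn)}\le 2^{-\alpha_p d}\cdot C_p\sqrt{n}.$$
   Context: $\Delta$ is Hamming distance on $\mathbb{F}_2^n$, $\mathcal{B}(x,r)=\{y:\Delta(x,y)\le r\}$, $\mathrm{Vol}(n,r)=|\mathcal{B}(0^n,r)|$, and $\mathrm{Vol}(n,pn;d)=|\mathcal{B}(0^n,pn)\cap\mathcal{B}(1^d0^{n-d},pn)|$, the size of the intersection of two Hamming balls of radius $pn$ whose centers are at distance $d$. *)

From mathcomp Require Import all_boot.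
From Stdlib Require Import Reals.

Set Implicit Arguments.
Unset Strict Implicit.
Unset Printing Implicit Defensive.

Definition hamming (n : nat) (x y : n.-tuple bool) : nat :=
  #|[set i : 'I_n | tnth x i != tnth y i]|.

Definition hball (n : nat) (x : n.-tuple bool) (r : nat) : {set n.-tuple bool} :=
  [set y | hamming x y <= r].

Definition zero_word (n : nat) : n.-tuple bool := [tuple false | i < n].
Definition ones_prefix (n d : nat) : n.-tuple bool := [tuple (i < d) | i < n].

Definition Vol (n r : nat) : nat := #|hball (zero_word n) r|.

Definition VolI (n r d : nat) : nat :=
  #|hball (zero_word n) r :&: hball (ones_prefix n d) r|.

Definition alpha (p : R) : R :=
  (/ 2 * (ln (/ (4 * p * (1 - p))) / ln 2))%R.

(* Weight a word y by s ^ (d(0, y) + d(1^d 0^(n-d), y)), where s ^ 2 = p / (1 - p).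
   Each word of the intersection weighs at least s ^ (2pn), while the total weight
   factors over the coordinates as (2s)^d (1 + s^2)^(n-d) = 2^(-alpha_p d) (1 + s^2)^n.
   Finally (1 + s^2)^n = sum_k C(n,k) s^(2k) has its largest term at k = pn, and the
   terms decay geometrically with ratio 1 - Theta(1/sqrt n) once k is sqrt(pn) away
   from it, so the sum is O(sqrt n) C(n,pn) s^(2pn) <= O(sqrt n) Vol(n,pn) s^(2pn). *)

(* Reals comes after ssralg so that %R is R_scope (and %N is BinNat's, hence %nat
   below); the tactic library comes last so that ring, field and lra are MathComp's. *)
From mathcomp Require Import all_boot all_order all_algebra.
From mathcomp Require Import Rstruct.
From Stdlib Require Import Reals.
From mathcomp Require Import ring lra zify.

Set Implicit Arguments.
Unset Strict Implicit.
Unset Printing Implicit Defensive.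

Import Order.TTheory GRing.Theory Num.Theory.
Local Open Scope ring_scope.

Lemma sum_tuple_prod (R : comPzSemiRingType) n (F : 'I_n -> bool -> R) :
  \sum_(x : n.-tuple bool) \prod_(i < n) F i (tnth x i) =
  \prod_(i < n) (F i false + F i true).
Proof.
under [RHS]eq_bigr do rewrite addrC -big_bool.
rewrite bigA_distr_bigA (reindex (fun x : n.-tuple bool => [ffun i => tnth x i])) /=.
  by apply: eq_bigr => x _; apply: eq_bigr => i _; rewrite ffunE.
exists (fun f : {ffun 'I_n -> bool} => [tuple f i | i < n]) => [x _|f _].
  by apply: eq_from_tnth => i; rewrite tnth_mktuple ffunE.
by apply/ffunP => i; rewrite ffunE tnth_mktuple.
Qed.

Lemma exprn_hamming (R : pzSemiRingType) n (x y : n.-tuple bool) (s : R) :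
  s ^+ hamming x y = \prod_(i < n) (if tnth x i != tnth y i then s else 1).
Proof. by rewrite -big_mkcond prodr_const /hamming cardsE. Qed.

Lemma prodr_ord_if_ltn (R : pzSemiRingType) n d (a b : R) : (d <= n)%nat ->
  \prod_(i < n) (if (i < d)%nat then a else b) = a ^+ d * b ^+ (n - d).
Proof.
move=> d_le_n; rewrite -(big_mkord xpredT (fun i => if (i < d)%nat then a else b)).
rewrite (@big_cat_nat _ _ _ d) //= -[in a ^+ d](subn0 d) -!prodr_const_nat.
congr (_ * _); first by apply: eq_big_nat => i /andP[_ ->].
by apply: eq_big_nat => i /andP[di _]; rewrite ltnNge di.
Qed.

Lemma VolI_weighted_le (R : realDomainType) n r d (s : R) :
  (d <= n)%nat -> 0 <= s -> s <= 1 ->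
  (VolI n r d)%:R * s ^+ (2 * r) <= (2 * s) ^+ d * (1 + s ^+ 2) ^+ (n - d).
Proof.
move=> d_le_n s0 s1.
set A := hball (zero_word n) r :&: hball (ones_prefix n d) r.
pose w (y : n.-tuple bool) := s ^+ hamming (zero_word n) y * s ^+ hamming (ones_prefix n d) y.
have w_ge0 y : 0 <= w y by rewrite mulr_ge0 ?exprn_ge0.
rewrite /VolI -/A mulrC mulr_natr -sumr_const.
apply: (le_trans (y := \sum_(y in A) w y)).
  apply: ler_sum => y; rewrite !inE => /andP[y0 y1].
  by rewrite /w mulnC exprM expr2; apply: ler_pM; rewrite ?exprn_ge0 //; exact: ler_wiXn2l.
apply: (le_trans (y := \sum_y w y)).
  by rewrite [leRHS](bigID [in A]) /= lerDl; exact: sumr_ge0.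
rewrite -prodr_ord_if_ltn //; under eq_bigr do rewrite /w !exprn_hamming -big_split /=.
rewrite (sum_tuple_prod (fun i b => (if tnth (zero_word n) i != b then s else 1) *
  (if tnth (ones_prefix n d) i != b then s else 1))).
rewrite (eq_bigr (fun i : 'I_n => if (i < d)%nat then 2 * s else 1 + s ^+ 2)) // => i _.
by rewrite !tnth_mktuple; case: (i < d)%nat => /=; ring.
Qed.

Lemma bin_le_Vol n r : ('C(n, r) <= Vol n r)%nat.
Proof.
pose ind (A : {set 'I_n}) : n.-tuple bool := [tuple i \in A | i < n].
have ind_inj : injective ind.
  move=> A B /(congr1 (@tnth _ _)) eqAB; apply/setP => i.
  by have := congr1 (fun f => f i) eqAB; rewrite !tnth_mktuple.
have ham_ind A : hamming (zero_word n) (ind A) = #|A|.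
  rewrite /hamming (_ : [set i | _] = A) //.
  by apply/setP => i; rewrite inE !tnth_mktuple; case: (i \in A).
rewrite /Vol -[n in 'C(n, _)]card_ord -card_draws -(card_imset _ ind_inj).
apply/subset_leq_card/subsetP => y /imsetP[A]; rewrite inE => /eqP A_r ->.
by rewrite inE ham_ind A_r.
Qed.

Section GeometricTail.
Variable R : realFieldType.

Lemma sum_geometric_le (rho : R) M : 0 <= rho < 1 ->
  \sum_(0 <= j < M) rho ^+ j <= (1 - rho)^-1.
Proof.
move=> /andP[rho0 rho1]; have rho1' : 0 < 1 - rho by rewrite subr_gt0.
have -> : \sum_(0 <= j < M) rho ^+ j = (1 - rho ^+ M) / (1 - rho).
  rewrite big_mkord; apply: (canRL (mulfK (lt0r_neq0 rho1'))).
  by rewrite mulrC -opprB mulNr -subrX1 opprB.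
by rewrite ler_pdivrMr // mulVf ?lt0r_neq0 // gerBl exprn_ge0.
Qed.

Lemma sum_expr_subn_le (rho : R) s M : 0 <= rho < 1 ->
  \sum_(0 <= j < M) rho ^+ (j - s) <= s%:R + (1 - rho)^-1.
Proof.
move=> rho01; have /andP[rho0 _] := rho01.
have ext : \sum_(0 <= j < M) rho ^+ (j - s) <= \sum_(0 <= j < s + M) rho ^+ (j - s).
  rewrite [leRHS](@big_cat_nat _ _ _ M) ?leq_addl //= lerDl.
  by apply: sumr_ge0 => j _; rewrite exprn_ge0.
apply: (le_trans ext); rewrite (@big_cat_nat _ _ _ s) ?leq_addr //=.
apply: lerD.
  rewrite (eq_big_nat _ _ (F2 := fun => 1)); last first.
    by move=> j /andP[_ js]; rewrite (eqP (ltnW js)) expr0.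
  by rewrite sumr_const_nat subn0.
rewrite -{1}(add0n s) big_addn addKn.
under eq_big_nat => j _ do rewrite addnK.
exact: sum_geometric_le.
Qed.

Lemma sum_le_plateau_geometric (u : nat -> R) (rho : R) s M :
  0 <= rho < 1 -> (forall j, 0 <= u j) ->
  (forall j, (j.+1 < M)%nat -> u j.+1 <= u j) ->
  (forall j, (s <= j)%nat -> (j.+1 < M)%nat -> u j.+1 <= rho * u j) ->
  \sum_(0 <= j < M) u j <= u 0 * (s%:R + (1 - rho)^-1).
Proof.
move=> rho01 u0 u_dec u_geo; have /andP[rho0 _] := rho01.
have u_le j : (j < M)%nat -> u j <= u 0 * rho ^+ (j - s).
  elim: j => [|j IH] jM; first by rewrite sub0n mulr1.
  have {}IH := IH (ltnW jM).
  have [js|sj] := ltnP j s.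
    by rewrite (eqP js) (eqP (ltnW js)) in IH *; apply: le_trans IH; exact: u_dec.
  apply: (le_trans (u_geo j sj jM)); rewrite subSn // exprS mulrCA.
  exact: ler_wpM2l.
apply: (le_trans (y := \sum_(0 <= j < M) u 0 * rho ^+ (j - s))).
  by apply: ler_sum_nat => j /andP[_]; exact: u_le.
by rewrite -mulr_sumr ler_wpM2l // sum_expr_subn_le.
Qed.

End GeometricTail.

Definition binom_term (R : nzSemiRingType) (n k : nat) (q : R) : R :=
  'C(n, k)%:R * q ^+ k.

Lemma binom_termS (R : comNzSemiRingType) n k (q : R) :
  k.+1%:R * binom_term n k.+1 q = (n - k)%:R * q * binom_term n k q.
Proof.
by rewrite /binom_term exprS mulrA -natrM mul_bin_left natrM mulrCA !mulrA [q * _]mulrC.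
Qed.

Section BinomialMode.
Variables (R : realFieldType) (n r : nat) (q : R).
Hypotheses (q_gt0 : 0 < q) (r_gt0 : (0 < r)%nat) (r_le_n : (r <= n)%nat).
Hypothesis mode : (n - r)%:R * q = r%:R.

Local Notation t k := (binom_term n k q).

Lemma binom_term_ge0 k : 0 <= t k.
Proof. by rewrite /binom_term mulr_ge0 // exprn_ge0 // ltW. Qed.

Lemma binom_term_ratio_ge k : (r <= k)%nat -> k.+1%:R * t k.+1 <= r%:R * t k.
Proof.
move=> rk; rewrite binom_termS -mode ler_wpM2r ?binom_term_ge0 //.
by rewrite ler_wpM2r ?(ltW q_gt0) // ler_nat leq_sub2l.
Qed.

Lemma binom_term_ratio_lt k : (k < r)%nat -> r%:R * t k <= k.+1%:R * t k.+1.
Proof.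
move=> kr; rewrite binom_termS -mode ler_wpM2r ?binom_term_ge0 //.
by rewrite ler_wpM2r ?(ltW q_gt0) // ler_nat leq_sub2l // ltnW.
Qed.

Lemma binom_sum_above_mode_le s : (0 < s)%nat ->
  \sum_(r <= k < n.+1) t k <= t r * (s%:R + (r + s)%:R / s%:R).
Proof.
move=> s_gt0.
have ratio j B : (0 < B)%nat -> (B <= (j + r).+1)%nat ->
    t (j.+1 + r) <= r%:R / B%:R * t (j + r).
  move=> B_gt0 B_le; rewrite mulrAC ler_pdivlMr ?ltr0n // addSn.
  apply: le_trans (binom_term_ratio_ge (leq_addl j r)).
  by rewrite mulrC ler_wpM2r ?binom_term_ge0 // ler_nat.
have rho01 : 0 <= (r%:R / (r + s)%:R : R) < 1.
  rewrite divr_ge0 //= ltr_pdivrMr ?ltr0n ?addn_gt0 ?r_gt0 // mul1r ltr_nat.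
  by rewrite -{1}(addn0 r) ltn_add2l.
rewrite -[r in \sum_(r <= k < _) _]add0n big_addn.
apply: (le_trans (@sum_le_plateau_geometric _ (fun j => t (j + r)) _ s _ rho01 _ _ _)).
- by move=> j; exact: binom_term_ge0.
- move=> j _; apply: le_trans (ratio j r r_gt0 _) _; first by rewrite leqW // leq_addl.
  by rewrite divff ?mul1r // pnatr_eq0 -lt0n.
- move=> j sj _; apply: ratio; first by rewrite addn_gt0 r_gt0.
  by lia.
rewrite add0n; apply: ler_wpM2l; first exact: binom_term_ge0.
have s_neq0 : s%:R != 0 :> R by rewrite pnatr_eq0 -lt0n.
have rs_neq0 : r%:R + s%:R != 0 :> R by rewrite -natrD pnatr_eq0 -lt0n addn_gt0 s_gt0 orbT.
suff -> : (1 - r%:R / (r + s)%:R)^-1 = (r + s)%:R / s%:R :> R by [].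
by rewrite natrD; field; rewrite s_neq0 rs_neq0.
Qed.

Lemma binom_sum_below_mode_le s : (0 < s)%nat -> (s <= r)%nat ->
  \sum_(0 <= k < r) t k <= t r * (s%:R + r%:R / s%:R).
Proof.
move=> s_gt0 s_le_r.
have ratio j B : (j < r)%nat -> (r - j <= B)%nat ->
    t (r - j.+1) <= B%:R / r%:R * t (r - j).
  move=> jr B_ge; rewrite mulrAC ler_pdivlMr ?ltr0n // mulrC.
  apply: le_trans (binom_term_ratio_lt _) _; first by rewrite ltn_subrL ?r_gt0.
  by rewrite subnSK // ler_wpM2r ?binom_term_ge0 // ler_nat.
have r_neq0 : r%:R != 0 :> R by rewrite pnatr_eq0 -lt0n.
have s_neq0 : s%:R != 0 :> R by rewrite pnatr_eq0 -lt0n.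
have rho01 : 0 <= ((r - s)%:R / r%:R : R) < 1.
  rewrite divr_ge0 //= ltr_pdivrMr ?ltr0n // mul1r ltr_nat.
  by rewrite ltn_subrL s_gt0.
rewrite big_nat_rev /=.
have -> : \sum_(0 <= k < r) t (0 + r - k.+1) = \sum_(0 <= j < r.+1) t (r - j) - t r.
  by rewrite big_nat_recl // subn0 addrC addKr.
rewrite lerBlDr; apply: le_trans (@sum_le_plateau_geometric _ (fun j => t (r - j)) _ s _ rho01 _ _ _) _.
- by move=> j; exact: binom_term_ge0.
- move=> j jr; apply: le_trans (ratio j r jr (leq_subr _ _)) _.
  by rewrite divff ?mul1r.
- by move=> j sj jr; apply: ratio => //; exact: leq_sub2l.
rewrite subn0 (_ : (1 - _)^-1 = r%:R / s%:R); first by rewrite lerDl binom_term_ge0.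
by rewrite natrB //; field; rewrite r_neq0 s_neq0.
Qed.

Lemma exprD1n_le_mode s : (0 < s)%nat -> (s <= r)%nat ->
  (1 + q) ^+ n <= t r * (2 * (s%:R + r%:R / s%:R) + 1).
Proof.
move=> s_gt0 s_le_r.
have -> : (1 + q) ^+ n = \sum_(0 <= k < n.+1) t k.
  by rewrite addrC exprD1n big_mkord; apply: eq_bigr => k _; rewrite -mulr_natl.
rewrite (@big_cat_nat _ _ _ r) //=; last exact: leqW.
apply: le_trans (lerD (binom_sum_below_mode_le s_gt0 s_le_r) (binom_sum_above_mode_le s_gt0)) _.
rewrite -mulrDr natrD (_ : _ + _ = 2 * (s%:R + r%:R / s%:R) + 1) //.
by field; rewrite pnatr_eq0 -lt0n.
Qed.

End BinomialMode.

Lemma exprD1n_le_sqrt_mode (R : rcfType) n r (q : R) :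
  0 < q -> (0 < r)%nat -> (r <= n)%nat -> (n - r)%:R * q = r%:R ->
  (1 + q) ^+ n <= 9 * Num.sqrt n%:R * binom_term n r q.
Proof.
move=> q_gt0 r_gt0 r_le_n mode.
(* A plateau of width about sqrt r balances the two terms s and r / s. *)
have [s_lo s_hi] := Nat.sqrt_spec r (Nat.le_0_l r); set s := Nat.sqrt r in s_lo s_hi.
have s_gt0 : (0 < s)%nat by nia.
have s_le_r : (s <= r)%nat by nia.
have s_neq0 : s%:R != 0 :> R by rewrite pnatr_eq0 -lt0n.
apply: le_trans (exprD1n_le_mode q_gt0 r_gt0 r_le_n mode s_gt0 s_le_r) _.
rewrite [leRHS]mulrC ler_wpM2l ?binom_term_ge0 //.
have s_le_sqrt : s%:R <= Num.sqrt n%:R :> R.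
  rewrite -[s%:R]ger0_norm // -sqrtr_sqr ler_sqrt // -natrX ler_nat; nia.
apply: le_trans (_ : 9 * s%:R <= _); last by rewrite ler_wpM2l.
rewrite (_ : _ + 1 = (2 * (s * s + r) + s)%:R / s%:R); last first.
  by rewrite natrD !natrM natrD; field.
rewrite ler_pdivrMr ?ltr0n // -!natrM ler_nat; nia.
Qed.

Lemma VolI_le_Vol (R : rcfType) n r d (s : R) :
  0 < s -> s <= 1 -> (d <= n)%nat -> (0 < r)%nat -> (r <= n)%nat ->
  (n - r)%:R * s ^+ 2 = r%:R ->
  (VolI n r d)%:R <= (2 * s / (1 + s ^+ 2)) ^+ d * (9 * Num.sqrt n%:R) * (Vol n r)%:R.
Proof.
move=> s_gt0 s_le1 d_le_n r_gt0 r_le_n mode.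
set q := s ^+ 2; have q_gt0 : 0 < q by rewrite exprn_gt0.
have q1_neq0 : 1 + q != 0 by rewrite lt0r_neq0 // addr_gt0.
have binom_le : (1 + q) ^+ n <= 9 * Num.sqrt n%:R * ((Vol n r)%:R * s ^+ (2 * r)).
  apply: le_trans (exprD1n_le_sqrt_mode q_gt0 r_gt0 r_le_n mode) _.
  rewrite ler_wpM2l ?mulr_ge0 ?sqrtr_ge0 // /binom_term exprM.
  by rewrite ler_wpM2r ?exprn_ge0 ?(ltW s_gt0) // ler_nat bin_le_Vol.
have weight : (2 * s) ^+ d * (1 + q) ^+ (n - d) = (2 * s / (1 + q)) ^+ d * (1 + q) ^+ n.
  by rewrite -{2}(subnKC d_le_n) exprD mulrA -exprMn divfK.
rewrite -(@ler_pM2r _ (s ^+ (2 * r))) ?exprn_gt0 //.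
apply: le_trans (VolI_weighted_le r d_le_n (ltW s_gt0) s_le1) _.
have g_ge0 : 0 <= 2 * (s / (1 + q)) by rewrite mulr_ge0 ?divr_ge0 ?addr_ge0 ?ltW.
by rewrite weight -!mulrA ler_wpM2l ?exprn_ge0 // mulrA.
Qed.

Lemma VolI_div_Vol_le (R : rcfType) (p : R) n r d :
  0 < p -> p < 2^-1 -> (0 < n)%nat -> (d <= n)%nat -> r%:R = p * n%:R ->
  (VolI n r d)%:R / (Vol n r)%:R <= Num.sqrt (4 * p * (1 - p)) ^+ d * 9 * Num.sqrt n%:R.
Proof.
move=> p_gt0 p_lt_half n_gt0 d_le_n r_eq.
have p1_gt0 : 0 < 1 - p by lra.
have q_gt0 : 0 < p / (1 - p) by rewrite divr_gt0.
set s := Num.sqrt (p / (1 - p)).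
have s2 : s ^+ 2 = p / (1 - p) by rewrite sqr_sqrtr ?ltW.
have s_gt0 : 0 < s by rewrite sqrtr_gt0.
have s_le1 : s <= 1 by rewrite -sqrtr1 ler_wsqrtr // ler_pdivrMr // mul1r; lra.
have r_le_n : (r <= n)%nat by rewrite -(ler_nat R) r_eq ler_piMl //; lra.
have r_gt0 : (0 < r)%nat by rewrite -(ltr0n R) r_eq mulr_gt0 // ltr0n.
have mode : (n - r)%:R * s ^+ 2 = r%:R.
  by rewrite natrB // r_eq s2; field; rewrite lt0r_neq0.
have g_eq : 2 * s / (1 + s ^+ 2) = Num.sqrt (4 * p * (1 - p)).
  have g_ge0 : 0 <= 2 * s / (1 + s ^+ 2).
    by rewrite divr_ge0 // ?mulr_ge0 ?addr_ge0 ?exprn_ge0 // ltW.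
  rewrite -(ger0_norm g_ge0) -sqrtr_sqr expr_div_n exprMn s2; congr Num.sqrt.
  by field; rewrite subrK oner_neq0 lt0r_neq0.
have Vol_gt0 : 0 < (Vol n r)%:R :> R.
  by rewrite ltr0n (leq_trans _ (bin_le_Vol n r)) // bin_gt0.
rewrite ler_pdivrMr // -g_eq -(mulrA _ 9).
exact: VolI_le_Vol.
Qed.

Lemma Rpower_alpha (p : R) d : 0 < p -> p < 1 ->
  Rpower 2 (- (alpha p * INR d)) = Num.sqrt (4 * p * (1 - p)) ^+ d.
Proof.
move=> p_gt0 p_lt1.
have y_gt0 : 0 < 4 * p * (1 - p) by rewrite !mulr_gt0 // subr_gt0.
have ln2_gt0 : (0 < ln 2)%R.
  by rewrite -ln_1; apply: ln_increasing; [exact: Rlt_0_1 | exact: IZR_lt].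
have ln2_neq0 : ln 2 != 0 by rewrite lt0r_neq0 //; exact/RltP.
rewrite -RsqrtE -RpowE -Rpower_pow; last by apply/RltP; rewrite RsqrtE sqrtr_gt0.
rewrite -Rpower_sqrt; last exact/RltP.
have four : 4%R = 4 :> R by rewrite IZRposE INRE.
rewrite Rpower_mult /Rpower /alpha four ln_Rinv; last exact/RltP.
congr exp; rewrite !RdivE !RmultE !RinvE !RoppE INRE.
by field; rewrite ln2_neq0 (_ : 2%R = 2 :> R) // pnatr_eq0.
Qed.

Theorem lemma9 (p : R) (hp0 : (0 < p)%R) (hp1 : (p < / 2)%R) :
  exists C : R, (0 < C)%R /\
  exists N : nat, forall n : nat, (N <= n)%coq_nat ->
    forall r : nat, INR r = (p * INR n)%R ->
    forall d : nat, (1 <= d)%coq_nat -> (d <= n)%coq_nat ->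
      (INR (VolI n r d) / INR (Vol n r)
         <= Rpower 2 (- (alpha p * INR d)) * C * sqrt (INR n))%R.
Proof.
have p_gt0 : 0 < p by exact/RltP.
have p_lt_half : p < 2^-1 by exact/RltP.
exists 9%R; split; first exact: IZR_lt.
exists 0%nat => n _ r r_eq d d_ge1 d_le_n.
rewrite Rpower_alpha //; last by lra.
apply/RleP; rewrite RdivE RsqrtE !INRE (_ : 9%R = 9) ?IZRposE ?INRE //.
apply: VolI_div_Vol_le => //; [lia | lia | by rewrite -!INRE].
Qed.
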